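(* Consider the contextual second-price pay-per-click auction problem described in the context, with a CTR predictor class $\mathcal{F}$ satisfying realizability with perfect predictor $f^*\in\mathcal{F}$. Run the exponential-weights algorithm described in the context with the optimistic squared error (OptSq) loss estimator and learning rate $\eta\le 1$. Then $$\mathbb{E}[\mathrm{Reg}]\le\frac{Z_T}{\eta}+O\Big(\eta\sum_{t=1}^T N_t\Big),\qquad Z_T=-\mathbb{E}\Big[\log\mathbb{E}_{f\sim q_1}\exp\Big(-\eta\sum_{t=1}^T(\hat\ell_{t,f}-\hat\ell_{t,f^*})\Big)\Big],$$ where the $O(\cdot)$ hides only an absolute constant.
   Context: Notation: for a vector $v$, $\mathrm{smax}_i v_i$ is the second-largest entry; $\arg\max_i v_i$, $\arg\mathrm{smax}_i v_i$ are the indices of the largest and second-largest entries, ties broken by a fixed deterministic rule. Problem: $T$ rounds. At each round $t$: the learner observes a context $x_t\in\mathcal{X}$ and $N_t$ bidders ($N=\max_tN_t$); chooses estimated CTRs $\tilde\rho_t\in[0,1]^{N_t}$; simultaneously bidders choose bids $b_{t,i}\in[0,1]$ (contexts and bids may be chosen by an adaptive adversary, bids without knowing $\tilde\rho_t$). Winner $i_t=\arg\max_{i\in[N_t]}b_{t,i}\tilde\rho_{t,i}$, runner-up $j_t=\arg\mathrm{smax}_{i\in[N_t]}b_{t,i}\tilde\rho_{t,i}$, payment per click $d_t=b_{t,j_t}\tilde\rho_{t,j_t}/\tilde\rho_{t,i_t}$; the ad $i_t$ is clicked with probability $\rho_{t,i_t}$ (true unknown CTR). The learner observes $b_t$ and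 the click indicator $c_t\in\{0,1\}$ and receives $c_td_t$. Regret: $\mathrm{Reg}=\sum_{t=1}^T\mathrm{smax}_{i\in[N_t]}b_{t,i}\rho_{t,i}-\sum_{t=1}^Tc_td_t$. Realizability: $\mathcal{F}$ is a class of functions $f:\mathcal{X}\times[N]\to[0,1]$ containing $f^*$ with $f^*(x_t,i)=\rho_{t,i}$ for all $t,i$. Algorithm: with learning rate $\eta>0$, at each round $t$ sample $f_t$ from the distribution $q_t$ over $\mathcal{F}$ given by $q_{t,f}\propto\exp(-\eta\sum_{s<t}\hat\ell_{s,f})$ (so $q_1$ is the uniform distribution over $\mathcal{F}$); set $\tilde\rho_{t,i}=f_t(x_t,i)$ for $i\in[N_t]$, run the auction, and for each $f\in\mathcal{F}$ define the OptSq estimator $$\hat\ell_{t,f}=\frac{1}{4\eta}\big(f(x_t,i_t)-c_t\big)^2-\mathrm{smax}_{j\in[N_t]}b_{t,j}f(x_t,j).$$ *)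

From HB Require Import structures.
From mathcomp Require Import all_boot all_order all_algebra.
From mathcomp Require Import all_classical all_reals all_analysis.
Set Implicit Arguments. Unset Strict Implicit. Unset Printing Implicit Defensive.
Import Order.TTheory GRing.Theory Num.Theory.
Local Open Scope ring_scope.

Section Auction.
Variables (R : realType) (X : Type) (F : finType).

Definition mxl (l : seq R) : R := \big[Num.max/head 0 l]_(y <- l) y.

(* first index of the list I achieving the maximal score: deterministic tie rule
   = smallest index *)
Definition amax (I : seq nat) (s : nat -> R) : nat :=
  nth 0%N I (find (fun i => s i == mxl (map s I)) I).

(* arg max_{i in [n]} s_i  (indices 0..n-1) *)
Definition winner (n : nat) (s : nat -> R) : nat := amax (iota 0 n) s.
Definition runner (n : nat) (s : nat -> R) : nat :=
  amax [seq i <- iota 0 n | i != winner n s] s.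
Definition smaxv (n : nat) (s : nat -> R) : R := s (runner n s).

(* one round of the interaction: context x_t, number of bidders N_t, bids b_t,
   sampled predictor f_t, click indicator c_t *)
Record round := Round { rx : X; rn : nat; rb : nat -> R; rf : F; rc : bool }.

Variable fv : F -> X -> nat -> R.  (* the predictor class (indexed by F) *)

Definition scores (x : X) (b : nat -> R) (f : F) : nat -> R :=
  fun i => b i * fv f x i.
Definition win (r : round) : nat := winner (rn r) (scores (rx r) (rb r) (rf r)).
Definition run (r : round) : nat := runner (rn r) (scores (rx r) (rb r) (rf r)).
(* payment per click d_t (with the convention y / 0 = 0 of MathComp) *)
Definition pay (r : round) : R :=
  rb r (run r) * fv (rf r) (rx r) (run r) / fv (rf r) (rx r) (win r).

Definition lhat (eta : R) (r : round) (g : F) : R :=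
  (4 * eta)^-1 * (fv g (rx r) (win r) - (rc r)%:R) ^+ 2
  - smaxv (rn r) (fun j => rb r j * fv g (rx r) j).

Definition cumloss (eta : R) (h : seq round) (g : F) : R :=
  \sum_(r <- h) lhat eta r g.

Definition qw (eta : R) (h : seq round) (g : F) : R :=
  expR (- eta * cumloss eta h g) / \sum_(g' : F) expR (- eta * cumloss eta h g').

(* adversary: maps the past history to (x_t, N_t, b_t) *)
Definition adversary := seq round -> (X * nat * (nat -> R)).

(* E[G(history after k more rounds)] starting from history h, where f_t ~ q_t and
   c_t ~ Bernoulli(rho_{t,i_t}), rho = fv fstar (realizability). *)
Fixpoint Eexp (eta : R) (fstar : F) (adv : adversary) (k : nat) (h : seq round)
    (G : seq round -> R) : R :=
  match k with
  | 0%N => G h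
  | k'.+1 =>
    let '(x, n, b) := adv h in
    \sum_(f : F) qw eta h f *
      (let p := fv fstar x (win (Round x n b f true)) in
       p * Eexp eta fstar adv k' (rcons h (Round x n b f true)) G
       + (1 - p) * Eexp eta fstar adv k' (rcons h (Round x n b f false)) G)
  end.

Definition regret (fstar : F) (h : seq round) : R :=
  \sum_(r <- h) (smaxv (rn r) (fun i => rb r i * fv fstar (rx r) i) - (rc r)%:R * pay r).

(* -log E_{f ~ q_1} exp(-eta sum_t (lhat_{t,f} - lhat_{t,f*})), q_1 uniform on F *)
Definition Zinner (eta : R) (fstar : F) (h : seq round) : R :=
  - ln ((#|F|%:R)^-1 * \sum_(g : F)
          expR (- eta * \sum_(r <- h) (lhat eta r g - lhat eta r fstar))).

Definition sumN (h : seq round) : R := \sum_(r <- h) (rn r)%:R.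

End Auction.

From HB Require Import structures.
From mathcomp Require Import all_boot all_order all_algebra.
From mathcomp Require Import all_classical all_reals all_analysis.
From mathcomp Require Import ring lra.
Set Implicit Arguments.
Unset Strict Implicit.
Unset Printing Implicit Defensive.
Import Order.TTheory GRing.Theory Num.Theory.
Local Open Scope ring_scope.

(* Let Phi = Reg - Z / eta - 8 eta sum_t N_t, with Z the [Zinner] term of
   the rounds played so far; Phi is 0 on the empty history and we show that its increments have
   nonpositive conditional mean.  Z grows by minus the log of the q-mean P of the new factor
   exp(-eta (lhat_g - lhat_fstar)).  Using ln P <= P - 1 and a second-order bound on exp, the
   mean of P over the click c ~ Bernoulli(rho_{i_t}) is at most
   1 + eta E_q[smax_g - smax_fstar] + 4 eta^2 - E_q[(g(i_t) - rho_{i_t})^2] / 24: the squared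
   loss rewards calibration at the winner, the optimistic term -smax brings in the predicted
   second price.  That optimism cancels, in q-mean, the regret's dependence on the sampled f,
   leaving only pay_t (f(i_t) - rho_{i_t}); AM-GM weighted by the q-probability that i_t wins
   charges it to the squared-loss term, at a cost 6 eta N_t. *)

Section ExpBounds.
Variable R : realType.
Implicit Types u r w y z : R.

Lemma expR_mul_1B_le1 w : w < 1 -> expR w * (1 - w) <= 1.
Proof.
move=> w1; rewrite -[leRHS](expR0 R) -(subrr w) expRD.
apply: ler_wpM2l; first exact: expR_ge0.
exact: expR_ge1Dx.
Qed.

Lemma expR_le_quad_quarter z : z <= 1/4 -> expR z <= 1 + z + 4/3 * z ^+ 2.
Proof.
move=> z4; have := @expR_mul_1B_le1 z ltac:(lra).
have := expR_gt0 z; set a := expR z => a0 a1.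
have : 1 <= (1 - z) * (1 + z + 4/3 * z ^+ 2).
  have -> : (1 - z) * (1 + z + 4/3 * z ^+ 2) = 1 + z ^+ 2 * (1 - 4 * z) / 3 by field.
  suff : 0 <= z ^+ 2 * (1 - 4 * z) / 3 by lra.
  by rewrite divr_ge0 // mulr_ge0 ?sqr_ge0 //; lra.
nra.
Qed.

Lemma expR_le_quad y : y <= 1 -> expR y <= 1 + y + 4 * y ^+ 2.
Proof.
move=> y1; set w := y / 2.
have -> : y = w + w by rewrite /w; field.
have := @expR_mul_1B_le1 w ltac:(rewrite /w; lra).
have := expR_gt0 w; rewrite expRD; set a := expR w => a0 a1.
have : 1 <= (1 - w) ^+ 2 * (1 + (w + w) + 4 * (w + w) ^+ 2).
  have -> : (1 - w) ^+ 2 * (1 + (w + w) + 4 * (w + w) ^+ 2)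
          = 1 + w ^+ 2 * (13 - 30 * w + 16 * w ^+ 2) by ring.
  suff : 0 <= w ^+ 2 * (13 - 30 * w + 16 * w ^+ 2) by lra.
  by rewrite mulr_ge0 ?sqr_ge0 //; rewrite /w; nra.
have : (a * (1 - w)) ^+ 2 <= 1.
  have : 0 <= a * (1 - w) by rewrite mulr_ge0 // ?ltW // /w; lra.
  by rewrite expr2; nra.
rewrite exprMn expr2 => ha hq.
have : 0 < (1 - w) ^+ 2 by rewrite exprn_gt0 // /w; lra.
nra.
Qed.

(* The exponents are [-eta (lhat_g - lhat_fstar)] split into their squared-loss part, for a
   prediction [u], a click probability [r], and the optimistic part [y]. *)
Lemma bernoulli_mean_expR_le u r y : 0 <= u <= 1 -> 0 <= r <= 1 -> y <= 1 ->
  r * expR (- (1/4 * ((u - 1) ^+ 2 - (r - 1) ^+ 2)) + y)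
  + (1 - r) * expR (- (1/4 * (u ^+ 2 - r ^+ 2)) + y)
  <= 1 + y + 4 * y ^+ 2 - (u - r) ^+ 2 / 24.
Proof.
move=> /andP[u0 u1] /andP[r0 r1] y1.
set z1 := - (1/4 * ((u - 1) ^+ 2 - (r - 1) ^+ 2)).
set z0 := - (1/4 * (u ^+ 2 - r ^+ 2)).
have h1 := @expR_le_quad_quarter z1 ltac:(rewrite /z1; nra).
have h0 := @expR_le_quad_quarter z0 ltac:(rewrite /z0; nra).
have mean_le : r * expR z1 + (1 - r) * expR z0 <= 1 - (u - r) ^+ 2 / 12.
  apply: (le_trans (y := r * (1 + z1 + 4/3 * z1 ^+ 2) + (1 - r) * (1 + z0 + 4/3 * z0 ^+ 2))).
    by apply: lerD; apply: ler_wpM2l => //; lra.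
  have -> : r * (1 + z1 + 4/3 * z1 ^+ 2) + (1 - r) * (1 + z0 + 4/3 * z0 ^+ 2)
     = 1 - (u - r) ^+ 2 / 12
       - (u - r) ^+ 2 / 12 * (2 - (u - r) ^+ 2 - 4 * r * (1 - r)) by rewrite /z1 /z0; field.
  suff : 0 <= (u - r) ^+ 2 / 12 * (2 - (u - r) ^+ 2 - 4 * r * (1 - r)) by lra.
  by rewrite mulr_ge0 ?divr_ge0 ?sqr_ge0 //; nra.
rewrite !expRD; set Q := 1 + y + 4 * y ^+ 2.
have -> : r * (expR z1 * expR y) + (1 - r) * (expR z0 * expR y)
        = (r * expR z1 + (1 - r) * expR z0) * expR y by ring.
have m0 : 0 <= r * expR z1 + (1 - r) * expR z0.
  by rewrite addr_ge0 // mulr_ge0 ?expR_ge0 //; lra.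
apply: (le_trans (y := (1 - (u - r) ^+ 2 / 12) * Q)).
  by apply: ler_pM; rewrite ?expR_ge0 ?expR_le_quad.
have : 1/2 <= Q by rewrite /Q; nra.
have : 0 <= (u - r) ^+ 2 by exact: sqr_ge0.
nra.
Qed.

End ExpBounds.

Section Argmax.
Variable R : realType.
Implicit Types (l : seq R) (I : seq nat) (s : nat -> R).

Lemma mxl_mem l : l != [::] -> mxl l \in l.
Proof.
case: l => [//|a l] _; rewrite /mxl big_seq.
apply: (big_ind (fun y => y \in a :: l)) => //; first exact: mem_head.
by move=> y z yl zl; case: leP.
Qed.

Lemma mxl_ge l y : y \in l -> y <= mxl l.
Proof. by move=> yl; exact: le_bigmax_seq. Qed.

Lemma has_argmax I s : I != [::] -> has (fun i => s i == mxl (map s I)) I.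
Proof.
move=> I0; have /mapP[i iI ->] := @mxl_mem (map s I) ltac:(by case: I I0).
by apply/hasP; exists i.
Qed.

Lemma amax_mem I s : I != [::] -> amax I s \in I.
Proof. by move=> I0; rewrite mem_nth // -has_find has_argmax. Qed.

Lemma amax_max I s j : j \in I -> s j <= s (amax I s).
Proof.
move=> jI; have I0 : I != [::] by case: I jI.
by rewrite /amax (eqP (nth_find 0%N (has_argmax s I0))) mxl_ge // map_f.
Qed.

Lemma winner_lt n s : (0 < n)%N -> (winner n s < n)%N.
Proof.
move=> n0; have I0 : iota 0 n != [::] by case: n n0.
by have := amax_mem s I0; rewrite mem_iota.
Qed.

Lemma winner_max n s j : (j < n)%N -> s j <= s (winner n s).
Proof. by move=> jn; rewrite amax_max // mem_iota. Qed.

Lemma runner_lt n s : (1 < n)%N -> (runner n s < n)%N.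
Proof.
move=> n2; set I := [seq i <- iota 0 n | i != winner n s].
have I0 : I != [::].
  apply/negP => /eqP I0; have : (0 \in I) || (1 \in I).
    rewrite !mem_filter !mem_iota.
    by case: (winner n s) => [|[|k]]; rewrite /= ?n2 ?(ltnW n2).
  by rewrite I0.
by have := amax_mem s I0; rewrite mem_filter mem_iota => /andP[].
Qed.

Lemma smaxv_le_winner n s : (1 < n)%N -> smaxv n s <= s (winner n s).
Proof. by move=> n2; exact/winner_max/runner_lt. Qed.

End Argmax.

Lemma sum_expR_gt0 (R : realType) (F : finType) (a : F) (w : F -> R) :
  0 < \sum_g expR (w g).
Proof.
rewrite (bigD1 a) //= ltr_pwDl ?expR_gt0 //.
by apply: sumr_ge0 => g _; exact: expR_ge0.
Qed.

Section ExponentialWeights.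
Variables (R : realType) (X : Type) (F : finType) (fv : F -> X -> nat -> R).
Variables (fstar : F) (eta : R) (adv : adversary R X F).

Notation q := (qw fv eta).
Notation E := (Eexp fv eta fstar adv).
Notation lhat := (lhat fv eta).

Lemma qw_gt0 h g : 0 < q h g.
Proof. by rewrite divr_gt0 ?expR_gt0 // (sum_expR_gt0 fstar). Qed.

Lemma qw_ge0 h g : 0 <= q h g.
Proof. exact/ltW/qw_gt0. Qed.

Lemma qw_sum1 h : \sum_g q h g = 1.
Proof. by rewrite -mulr_suml divff // lt0r_neq0 // (sum_expR_gt0 fstar). Qed.

Lemma qw_mean_affine h a (u v : F -> R) :
  \sum_g q h g * (a + u g - v g) = a + \sum_g q h g * u g - \sum_g q h g * v g.
Proof.
under eq_bigr => g _ do rewrite mulrBr mulrDr.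
by rewrite sumrB big_split /= -mulr_suml qw_sum1 mul1r.
Qed.

Lemma Eexp_linear k h a G1 G2 :
  E k h (fun h' => a * G1 h' + G2 h') = a * E k h G1 + E k h G2.
Proof.
elim: k h => [//|k IH] h /=; case: (adv h) => [[x n] b].
rewrite mulr_sumr -big_split; apply: eq_bigr => f _ /=.
by rewrite !IH; ring.
Qed.

Hypothesis fstar01 : forall x i, 0 <= fv fstar x i <= 1.

(* The sum is the conditional mean of [psi] over [f ~ q h] and the click [c ~ Bernoulli(rho)]. *)
Lemma Eexp_supermartingale (G : seq (round R X F) -> R) psi :
  (forall h r, G (rcons h r) = G h + psi h r) ->
  (forall h x n b, adv h = (x, n, b) ->
     \sum_f q h f *
       (fv fstar x (win fv (Round x n b f true)) * psi h (Round x n b f true)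
        + (1 - fv fstar x (win fv (Round x n b f true))) * psi h (Round x n b f false)) <= 0) ->
  forall k h, E k h G <= G h.
Proof.
move=> G_rcons psi_le0; elim=> [//|k IH] h /=.
case adv_h: (adv h) => [[x n] b]; have := psi_le0 h x n b adv_h.
set p := fun f => fv fstar x (win fv (Round x n b f true)).
set S := \sum_f _ => S_le0.
apply: (le_trans (y := \sum_f q h f * (p f * G (rcons h (Round x n b f true))
                          + (1 - p f) * G (rcons h (Round x n b f false))))).
  apply: ler_sum => f _; apply: ler_wpM2l; first exact: qw_ge0.
  have /andP[p0 p1] := fstar01 x (win fv (Round x n b f true)).
  by apply: lerD; apply: ler_wpM2l; rewrite ?subr_ge0 ?IH.
have -> : \sum_f q h f * (p f * G (rcons h (Round x n b f true))
                          + (1 - p f) * G (rcons h (Round x n b f false)))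
          = G h * \sum_f q h f + S.
  by rewrite mulr_sumr -big_split /=; apply: eq_bigr => f _; rewrite /p !G_rcons; ring.
by rewrite qw_sum1 mulr1 gerDl.
Qed.

Definition relloss h g := \sum_(r <- h) (lhat r g - lhat r fstar).

Lemma qw_relloss h g :
  q h g = expR (- eta * relloss h g) / \sum_g' expR (- eta * relloss h g').
Proof.
have split_loss g' : expR (- eta * cumloss fv eta h g')
    = expR (- eta * relloss h g') * expR (- eta * cumloss fv eta h fstar).
  by rewrite -expRD /relloss sumrB /cumloss; congr expR; ring.
rewrite /qw split_loss; under eq_bigr => g' _ do rewrite split_loss.
rewrite -mulr_suml invfM mulrACA divff ?mulr1 //.
exact/lt0r_neq0/expR_gt0.
Qed.

Lemma Zinner_nil : Zinner fv eta fstar [::] = 0.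
Proof.
rewrite /Zinner; under eq_bigr => g _ do rewrite big_nil mulr0 expR0.
rewrite sumr_const -[_ *+ _]mulr_natr mul1r mulVf ?ln1 ?oppr0 //.
by rewrite pnatr_eq0 -lt0n; apply/card_gt0P; exists fstar.
Qed.

(* The ratio of consecutive normalisers [W] is the [q]-mean of the new weight factor. *)
Lemma Zinner_rcons h r : Zinner fv eta fstar (rcons h r) = Zinner fv eta fstar h
  - ln (\sum_g q h g * expR (- eta * (lhat r g - lhat r fstar))).
Proof.
set W := fun h' => \sum_g expR (- eta * relloss h' g).
have W_gt0 h' : 0 < W h' by exact: sum_expR_gt0 fstar _.
have W_rcons : W (rcons h r) = W h * \sum_g q h g * expR (- eta * (lhat r g - lhat r fstar)).
  rewrite mulr_sumr; apply: eq_bigr => g _.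
  rewrite qw_relloss /relloss -cats1 big_cat big_seq1 /= mulrDr expRD -/(W h).
  by field; exact: lt0r_neq0.
have Z_W h' : Zinner fv eta fstar h' = - ln ((#|F|%:R)^-1 * W h') by [].
have F_gt0 : 0 < (#|F|%:R : R)^-1 by rewrite invr_gt0 ltr0n; apply/card_gt0P; exists fstar.
have mean_gt0 : 0 < \sum_g q h g * expR (- eta * (lhat r g - lhat r fstar)).
  by have := W_gt0 (rcons h r); rewrite W_rcons pmulr_rgt0.
by rewrite !Z_W W_rcons mulrA lnM ?posrE ?(mulr_gt0 F_gt0 (W_gt0 h)) // opprD.
Qed.

End ExponentialWeights.

Lemma mul_le_amgm (R : realType) (t d l : R) :
  0 <= t <= 1 -> 0 < l -> t * d <= l * d ^+ 2 + (4 * l)^-1.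
Proof.
move=> /andP[t0 t1] l0; have l4 : 0 < 4 * l by rewrite mulr_gt0.
rewrite -(ler_pM2l l4) mulrDr mulfV ?lt0r_neq0 //.
have : 0 <= (2 * l * d - t) ^+ 2 by exact: sqr_ge0.
nra.
Qed.

Section ClassWeights.
Variables (R : realType) (F : finType) (q : F -> R) (k : F -> nat).

Definition class_weight j := \sum_(g | k g == j) q g.

Lemma sum_div_class_weight_le n :
  (forall f, (k f < n)%N) -> \sum_f q f / class_weight (k f) <= n%:R.
Proof.
move=> k_lt; have split_class f :
    q f / class_weight (k f) = \sum_(j < n) (if k f == j then q f / class_weight j else 0).
  by rewrite -big_mkcond /= (big_pred1 (Ordinal (k_lt f))).
rewrite (eq_bigr _ (fun f _ => split_class f)) exchange_big /=.
apply: (le_trans (y := \sum_(j < n) (1 : R))); last by rewrite sumr_const card_ord.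
apply: ler_sum => j _.
rewrite -big_mkcond /= -mulr_suml -/(class_weight j).
by have [->|nz] := eqVneq (class_weight j) 0; rewrite ?invr0 ?mulr0 ?divff.
Qed.

Hypothesis q_ge0 : forall f, 0 <= q f.

Lemma le_class_weight f : q f <= class_weight (k f).
Proof. by rewrite /class_weight (bigD1 f) //= lerDl sumr_ge0. Qed.

Lemma sum_class_weight_le (D : F -> nat -> R) : (forall g j, 0 <= D g j) ->
  \sum_f q f * class_weight (k f) * D f (k f) <= \sum_f q f * \sum_g q g * D g (k f).
Proof.
move=> D_ge0; under [leRHS]eq_bigr => f _ do rewrite mulr_sumr.
rewrite exchange_big /=; apply: ler_sum => f _.
rewrite /class_weight mulr_sumr mulr_suml big_mkcond /=; apply: ler_sum => g _.
case: eqP => [->|_]; first by rewrite mulrCA mulrA.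
by rewrite !mulr_ge0.
Qed.

End ClassWeights.

Section OneRound.
Variables (R : realType) (X : Type) (F : finType) (fv : F -> X -> nat -> R).
Variables (fstar : F) (eta : R).
Hypothesis fv01 : forall g x i, 0 <= fv g x i <= 1.
Hypothesis eta_gt0 : 0 < eta.
Hypothesis eta_le1 : eta <= 1.

Notation q := (qw fv eta).
Notation lhat := (lhat fv eta).

(* Reg - Z / eta - C eta sum N_t, in the shape expected by [Eexp_linear]. *)
Definition potential (C : R) h :=
  (- eta^-1) * Zinner fv eta fstar h + ((- (C * eta)) * sumN h + regret fv fstar h).

Definition potential_incr (C : R) h (r : round R X F) :=
  smaxv (rn r) (fun i => rb r i * fv fstar (rx r) i) - (rc r)%:R * pay fv r
  + eta^-1 * ln (\sum_g q h g * expR (- eta * (lhat r g - lhat r fstar)))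
  - C * eta * (rn r)%:R.

Lemma potential_nil C : potential C [::] = 0.
Proof. by rewrite /potential Zinner_nil /sumN /regret !big_nil; ring. Qed.

Lemma potential_rcons C h r :
  potential C (rcons h r) = potential C h + potential_incr C h r.
Proof.
rewrite /potential Zinner_rcons /sumN /regret -!cats1 !big_cat !big_seq1 /=.
by rewrite /potential_incr; field; exact: lt0r_neq0.
Qed.

Variables (h : seq (round R X F)) (x : X) (n : nat) (b : nat -> R).
Hypothesis n_gt1 : (1 < n)%N.
Hypothesis b01 : forall i, (i < n)%N -> 0 <= b i <= 1.

Definition smax_bid g := smaxv n (fun j => b j * fv g x j).
Definition winner_of f := winner n (scores fv x b f).
Definition pay_of f := smax_bid f / fv f x (winner_of f).

Lemma winner_of_lt f : (winner_of f < n)%N.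
Proof. exact/winner_lt/ltnW. Qed.

Lemma smax_bid01 g : 0 <= smax_bid g <= 1.
Proof.
have r_lt := runner_lt (fun j => b j * fv g x j) n_gt1.
have /andP[b0 b1] := b01 r_lt; have /andP[f0 f1] := fv01 g x (runner n (fun j => b j * fv g x j)).
by rewrite mulr_ge0 //= -[leRHS]mulr1 ler_pM.
Qed.

Lemma smax_bid_le_winner f : smax_bid f <= fv f x (winner_of f).
Proof.
apply: le_trans (smaxv_le_winner _ n_gt1) _.
have /andP[b0 b1] := b01 (winner_of_lt f); have /andP[f0 _] := fv01 f x (winner_of f).
by rewrite -[leRHS]mul1r ler_wpM2r.
Qed.

Lemma pay_of01 f : 0 <= pay_of f <= 1.
Proof.
have /andP[s0 _] := smax_bid01 f; have /andP[f0 _] := fv01 f x (winner_of f).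
rewrite /pay_of divr_ge0 //=; have [->|nz] := eqVneq (fv f x (winner_of f)) 0.
  by rewrite invr0 mulr0.
by rewrite ler_pdivrMr ?lt0r ?nz // mul1r smax_bid_le_winner.
Qed.

(* When the winner's predicted CTR is [0] so is [smax_bid f], which makes up for [y / 0 = 0]. *)
Lemma pay_ofM f : pay_of f * fv f x (winner_of f) = smax_bid f.
Proof.
have [z|nz] := eqVneq (fv f x (winner_of f)) 0; last by rewrite divfK.
have /andP[s0 _] := smax_bid01 f; have := smax_bid_le_winner f.
by rewrite z mulr0 => s_le0; apply/eqP; rewrite eq_le s0 s_le0.
Qed.

Definition weight_factor f (c : bool) :=
  \sum_g q h g * expR (- eta * (lhat (Round x n b f c) g - lhat (Round x n b f c) fstar)).

Lemma weight_factor_gt0 f c : 0 < weight_factor f c.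
Proof.
rewrite /weight_factor (bigD1 fstar) //= ltr_pwDl //.
  exact: mulr_gt0 (qw_gt0 _ fstar _ _ _) (expR_gt0 _).
by apply: sumr_ge0 => g _; rewrite mulr_ge0 ?(qw_ge0 _ fstar) ?expR_ge0.
Qed.

Lemma lhat_rel_exponent f g (c : bool) (r := Round x n b f c) (i := winner_of f) :
  - eta * (lhat r g - lhat r fstar) =
  - (1/4 * ((fv g x i - c%:R) ^+ 2 - (fv fstar x i - c%:R) ^+ 2))
  + eta * (smax_bid g - smax_bid fstar).
Proof. by rewrite /lhat /smax_bid /=; field; exact: lt0r_neq0. Qed.

Definition optimism := \sum_g q h g * (smax_bid g - smax_bid fstar).
Definition sq_gap i := \sum_g q h g * (fv g x i - fv fstar x i) ^+ 2.

Lemma mean_weight_factor_le f (p := fv fstar x (winner_of f)) :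
  p * weight_factor f true + (1 - p) * weight_factor f false
  <= 1 + eta * optimism + 4 * eta ^+ 2 - sq_gap (winner_of f) / 24.
Proof.
set i := winner_of f.
have -> : 1 + eta * optimism + 4 * eta ^+ 2 - sq_gap i / 24 =
    \sum_g q h g * (1 + 4 * eta ^+ 2 + eta * (smax_bid g - smax_bid fstar)
                    - (fv g x i - p) ^+ 2 / 24).
  rewrite (qw_mean_affine _ fstar) /optimism /sq_gap mulr_sumr mulr_suml (addrAC 1).
  by congr (_ + _ - _); apply: eq_bigr => g _; rewrite /p; ring.
rewrite /weight_factor !mulr_sumr -big_split /=; apply: ler_sum => g _.
rewrite !lhat_rel_exponent -/i mulr1n mulr0n !subr0 mulrCA (mulrCA (1 - p)) -mulrDr.
apply: ler_wpM2l; first exact: (qw_ge0 _ fstar).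
set y := eta * (smax_bid g - smax_bid fstar).
have /andP[sg0 sg1] := smax_bid01 g; have /andP[ss0 ss1] := smax_bid01 fstar.
have y_sq : y ^+ 2 <= eta ^+ 2.
  by rewrite /y exprMn -[leRHS]mulr1 ler_wpM2l ?sqr_ge0 //; nra.
have y_le1 : y <= 1.
  apply: le_trans eta_le1; rewrite /y -[leRHS]mulr1.
  by apply: ler_wpM2l; [exact: ltW | lra].
have := bernoulli_mean_expR_le (fv01 g x i) (fv01 fstar x i) y_le1.
rewrite /p; lra.
Qed.

Lemma mean_potential_incr_le C f (i := winner_of f) (p := fv fstar x i) :
  p * potential_incr C h (Round x n b f true)
  + (1 - p) * potential_incr C h (Round x n b f false)
  <= smax_bid fstar - smax_bid f + pay_of f * (fv f x i - p) + optimism + 4 * eta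
     - (24 * eta)^-1 * sq_gap i - C * eta * n%:R.
Proof.
have incr_c (c : bool) : potential_incr C h (Round x n b f c) = smax_bid fstar
    - c%:R * pay_of f + eta^-1 * ln (weight_factor f c) - C * eta * n%:R by [].
have ln_le c : ln (weight_factor f c) <= weight_factor f c - 1.
  have := @le_ln1Dx R (weight_factor f c - 1); rewrite [1 + _]addrC subrK; apply.
  by have := weight_factor_gt0 f c; lra.
have ie_gt0 : 0 < eta^-1 by rewrite invr_gt0.
have /andP[p0 p1] : 0 <= p <= 1 by exact: fv01.
have tM : pay_of f * fv f x i = smax_bid f := pay_ofM f.
rewrite !incr_c mulr1n mulr0n mul0r mul1r.
set t := pay_of f in tM *; set W1 := weight_factor f true; set W0 := weight_factor f false.
set K := C * eta * n%:R.
have mean_le : p * (smax_bid fstar - t + eta^-1 * ln W1 - K)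
             + (1 - p) * (smax_bid fstar - 0 + eta^-1 * ln W0 - K)
             <= smax_bid fstar - p * t + eta^-1 * (p * W1 + (1 - p) * W0 - 1) - K.
  have -> : smax_bid fstar - p * t + eta^-1 * (p * W1 + (1 - p) * W0 - 1) - K
      = p * (smax_bid fstar - t + eta^-1 * (W1 - 1) - K)
        + (1 - p) * (smax_bid fstar - 0 + eta^-1 * (W0 - 1) - K) by ring.
  by apply: lerD; apply: ler_wpM2l; rewrite ?subr_ge0 // lerD2r lerD2l ler_pM2l ?ln_le.
have ie_mean : eta^-1 * (p * W1 + (1 - p) * W0 - 1)
               <= optimism + 4 * eta - (24 * eta)^-1 * sq_gap i.
  have -> : optimism + 4 * eta - (24 * eta)^-1 * sq_gap i
      = eta^-1 * (eta * optimism + 4 * eta ^+ 2 - sq_gap i / 24).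
    by field; exact: lt0r_neq0.
  rewrite ler_pM2l //; have /= := mean_weight_factor_le f; rewrite -/i -/p -/W1 -/W0.
  lra.
lra.
Qed.

Lemma pay_gap_le f (i := winner_of f) (d := fv f x i - fv fstar x i)
    (w := class_weight (q h) winner_of i) :
  q h f * (pay_of f * d) <= (24 * eta)^-1 * (q h f * w * d ^+ 2) + 6 * eta * (q h f / w).
Proof.
have q_gt0 := qw_gt0 fv fstar eta h f.
have w_gt0 : 0 < w := lt_le_trans q_gt0 (le_class_weight winner_of (qw_ge0 fv fstar eta h) f).
have l_gt0 : 0 < w / (24 * eta) by rewrite divr_gt0 // mulr_gt0.
have -> : (24 * eta)^-1 * (q h f * w * d ^+ 2) + 6 * eta * (q h f / w)
    = q h f * (w / (24 * eta) * d ^+ 2 + (4 * (w / (24 * eta)))^-1).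
  by field; rewrite !lt0r_neq0.
by rewrite ler_wpM2l ?(ltW q_gt0) ?mul_le_amgm ?pay_of01.
Qed.

(* For [C >= 8] the potential is a supermartingale: the AM-GM slack [6 eta n] and the
   [4 eta] from the exponential bound are paid by [C eta n] since [n >= 2]. *)
Lemma one_round C : 8 <= C ->
  \sum_f q h f * (fv fstar x (win fv (Round x n b f true)) * potential_incr C h (Round x n b f true)
     + (1 - fv fstar x (win fv (Round x n b f true))) * potential_incr C h (Round x n b f false))
  <= 0.
Proof.
move=> C_ge8; set T := fun f => pay_of f * (fv f x (winner_of f) - fv fstar x (winner_of f)).
set c := (24 * eta)^-1; set K := C * eta * n%:R.
apply: le_trans (ler_sum _ (fun f _ => ler_wpM2l (qw_ge0 fv fstar eta h f)
                                        (mean_potential_incr_le C f))) _.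
have -> : \sum_f q h f * (smax_bid fstar - smax_bid f + T f + optimism + 4 * eta
                          - c * sq_gap (winner_of f) - K)
    = \sum_f q h f * (smax_bid fstar - smax_bid f) + \sum_f q h f * T f
      + (\sum_f q h f) * (optimism + 4 * eta - K) - c * \sum_f q h f * sq_gap (winner_of f).
  by rewrite mulr_suml mulr_sumr -!big_split -sumrB /=; apply: eq_bigr => f _; ring.
have -> : \sum_f q h f * (smax_bid fstar - smax_bid f) = - optimism.
  by rewrite /optimism -sumrN; apply: eq_bigr => f _; ring.
rewrite (qw_sum1 fv fstar eta h) mul1r.
have T_le : \sum_f q h f * T f <= c * \sum_f q h f * sq_gap (winner_of f) + 6 * eta * n%:R.
  apply: le_trans (ler_sum _ (fun f _ => pay_gap_le f)) _.
  rewrite big_split /= -!mulr_sumr; apply: lerD; apply: ler_wpM2l.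
  - by rewrite invr_ge0 mulr_ge0 // ltW.
  - pose D g j := (fv g x j - fv fstar x j) ^+ 2.
    exact: (sum_class_weight_le (D := D) winner_of (qw_ge0 fv fstar eta h) (fun g j => sqr_ge0 _)).
  - by rewrite mulr_ge0 // ltW.
  - exact (sum_div_class_weight_le (q h) winner_of_lt).
have n_ge2 : 2 <= (n%:R : R) by rewrite (ler_nat R 2 n).
have : 0 <= eta * ((C - 8) * n%:R + 2 * (n%:R - 2)).
  apply: mulr_ge0; first exact: ltW.
  by apply: addr_ge0; apply: mulr_ge0; lra.
rewrite /K; lra.
Qed.

End OneRound.

Theorem theorem3 :
  exists C : nat,
  forall (R : realType) (X : Type) (F : finType) (fv : F -> X -> nat -> R)
         (fstar : F) (eta : R) (T : nat) (adv : adversary R X F),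
    injective fv ->
    (forall g x i, 0 <= fv g x i <= 1) ->
    0 < eta -> eta <= 1 ->
    (forall h, (2 <= (adv h).1.2)%N) ->
    (forall h i, (i < (adv h).1.2)%N -> 0 <= (adv h).2 i <= 1) ->
    Eexp fv eta fstar adv T [::] (regret fv fstar)
      <= Eexp fv eta fstar adv T [::] (Zinner fv eta fstar) / eta
         + C%:R * eta * Eexp fv eta fstar adv T [::] (@sumN R X F).
Proof.
(* Injectivity of [fv] (distinct indices are distinct predictors) plays no role. *)
exists 8%N => R X F fv fstar eta T adv _ fv01 eta_gt0 eta_le1 n_ge2 b01.
have : Eexp fv eta fstar adv T [::] (potential fv fstar eta 8) <= potential fv fstar eta 8 [::].
  apply: (Eexp_supermartingale (fun x => fv01 fstar x) (potential_rcons fv fstar eta_gt0 8)).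
  move=> h x n b adv_h; have := n_ge2 h; have := b01 h; rewrite adv_h /= => b01h n_ge2h.
  by apply: one_round => //; exact: lexx.
by rewrite potential_nil /potential !Eexp_linear; lra.
Qed.
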